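(* Let $G$ be a $4$-regular graph on $n\ge 7$ vertices and let $G'$ be the labeled complete graph on $V(G)$ whose $+$ edges are exactly the edges of $G$. Let $H$ be the labeled complete graph obtained from $G'$ by adding, for every $3$-set $\{u,v,w\}\subseteq V(G')$, a new set $C_{uvw}$ of $7$ vertices, where all edges within $C_{uvw}$ are $+$, all edges from $C_{uvw}$ to $u,v,w$ are $+$, and all other edges incident to $C_{uvw}$ are $-$. Assign tolerance $t_u=7\left(\binom{n-1}{2}-1\right)+2$ to each $u\in V(G')$ and $t_v=3$ to each $v\in V(H)\setminus V(G')$. Then $H$ has a clustering in which every vertex $v$ has at most $t_v$ incident errors if and only if $V(G)$ can be partitioned into sets each of which induces a triangle in $G$.
   Context: A clustering is a partition of the vertex set. An error at a vertex $v$ is an incident edge that is a $+$ edge between different clusters or a $-$ edge within a cluster. *)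

From mathcomp Require Import all_boot.
Set Implicit Arguments. Unset Strict Implicit. Unset Printing Implicit Defensive.

Definition triple (T : finType) := {S : {set T} | #|S| == 3}.

(* Vertex set of H: original vertices, plus vertices (S, i), i < 7,
   forming the 7-set C_S for each 3-set S. *)
Definition HV (T : finType) := (T + (triple T * 'I_7))%type.

(* Sign of the edge xy in H (true = "+", false = "-"); only used for x != y. *)
Definition hplus (T : finType) (e : rel T) (x y : HV T) : bool :=
  match x, y with
  | inl u, inl v => e u v
  | inl u, inr (A, _) => u \in val A
  | inr (A, _), inl u => u \in val A
  | inr (A, _), inr (B, _) => A == B
  end.

Definition errors (V : finType) (plus : V -> V -> bool) (P : {set {set V}}) (v : V) : nat :=
  #|[set u | (u != v) &&
      (if plus u v then pblock P u != pblock P v else pblock P u == pblock P v)]|.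

Definition tolerant_clustering (V : finType) (plus : V -> V -> bool) (t : V -> nat) :=
  exists P : {set {set V}}, partition P [set: V] /\ forall v, errors plus P v <= t v.

Definition tol (T : finType) (v : HV T) : nat :=
  match v with
  | inl _ => 7 * ('C(#|T|.-1, 2) - 1) + 2
  | inr _ => 3
  end.

Definition triangle_partition (T : finType) (e : rel T) :=
  exists P : {set {set T}}, partition P [set: T] /\
    forall B, B \in P -> #|B| = 3 /\ {in B &, forall x y, x != y -> e x y}.

(* Gadget vertices tolerate only 3 errors, so in a tolerant clustering every
   gadget C_S lies inside one cluster and distinct gadgets lie in distinct
   clusters.  A vertex u of G lies in 'C(n-1, 2) triples; if its cluster met
   none of their gadgets, u would have 7 'C(n-1, 2) errors, so it meets exactly
   one, C_(home u), and the other gadgets through u already cost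
   7 ('C(n-1, 2) - 1) errors.  The remaining budget of 2 errors, against the
   4 neighbours of u, forces the two other vertices of home u to be neighbours
   of u in its cluster; hence the sets home u partition V(G) into triangles.
   Conversely, putting each triangle of a triangle partition in one cluster
   with its gadget, and every other gadget in a cluster of its own, gives a
   vertex of G exactly 2 neighbours outside its triangle as remaining errors. *)

From mathcomp Require Import all_boot zify.
Set Implicit Arguments. Unset Strict Implicit. Unset Printing Implicit Defensive.

Lemma card_triples_at (T : finType) (u : T) :
  #|[set A : triple T | u \in val A]| = 'C(#|T|.-1, 2).
Proof.
have -> : #|[set A : triple T | u \in val A]| =
          #|[set S : {set T} | (#|S| == 3) && (u \in S)]|.
  rewrite -(card_imset _ val_inj); apply: eq_card => S; rewrite inE.
  apply/imsetP/andP.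
  - by case=> A; rewrite inE => uA ->; split => //; exact: (valP A).
  - by case=> cS uS; exists (Sub S cS : triple T); rewrite ?inE /= ?SubK.
have -> : [set S : {set T} | (#|S| == 3) && (u \in S)] =
   (fun B => u |: B) @: [set B : {set T} | B \subset [set~ u] & #|B| == 2].
  apply/setP => S; rewrite inE; apply/andP/imsetP.
  - case=> /eqP cS uS; exists (S :\ u); last by rewrite setD1K.
    rewrite inE; apply/andP; split.
      by apply/subsetP => x; rewrite !inE => /andP[].
    by move: cS; rewrite (cardsD1 u S) uS add1n => -[->].
  - case=> B; rewrite inE => /andP[sB cB] ->; split; last by rewrite setU11.
    have uB : u \notin B by apply/negP => /(subsetP sB); rewrite !inE eqxx.
    by rewrite cardsU1 uB (eqP cB).
rewrite card_in_imset ?cards_draws ?cardsC1 //.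
move=> B1 B2; rewrite !inE => /andP[s1 _] /andP[s2 _] E.
have u1 : u \notin B1 by apply/negP => /(subsetP s1); rewrite !inE eqxx.
have u2 : u \notin B2 by apply/negP => /(subsetP s2); rewrite !inE eqxx.
by rewrite -(setU1K u1) -(setU1K u2) E.
Qed.

Lemma card_other_triples_at (T : finType) (u : T) (A : triple T) : u \in val A ->
  #|[set B : triple T | u \in val B] :\ A| = 'C(#|T|.-1, 2) - 1.
Proof.
move=> uA; rewrite -(card_triples_at u) (cardsD1 A [set B : triple T | u \in val B]).
by rewrite inE uA add1n subn1.
Qed.

Lemma card_inl_inr_setU (A B : finType) (S1 : {set A}) (S2 : {set B}) :
  #|(inl @: S1 :|: inr @: S2) : {set A + B}| = #|S1| + #|S2|.
Proof.
rewrite -(card_imset S1 (@inl_inj A B)) -(card_imset S2 (@inr_inj A B)).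
apply/eqP; rewrite (leq_card_setU _ _).2 disjoint_subset.
by apply/subsetP => _ /imsetP[x _ ->]; rewrite !inE; apply/imsetP => -[].
Qed.

Lemma gadget_inj (T : finType) (A : triple T) :
  injective (fun i : 'I_7 => inr (A, i) : HV T).
Proof. by move=> i j [->]. Qed.

Section Labellings.

Variable V : finType.

Definition error_set (X : eqType) (plus : V -> V -> bool) (lab : V -> X) (v : V) :
  {set V} :=
  [set u | (u != v) && (if plus u v then lab u != lab v else lab u == lab v)].

Lemma mem_pblock_preim (X : eqType) (lab : V -> X) x y :
  (y \in pblock (preim_partition lab [set: V]) x) = (lab x == lab y).
Proof.
have eqi : {in [set: V] & &, equivalence_rel (fun x y => lab x == lab y)}.
  by split=> // /eqP->.
by rewrite (pblock_equivalence_partition eqi) ?inE.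
Qed.

Lemma error_set_preim_partition (X : eqType) plus (lab : V -> X) v :
  error_set plus (pblock (preim_partition lab [set: V])) v = error_set plus lab v.
Proof.
have [/eqP cP tiP _] := and3P (preim_partitionP lab [set: V]).
have pblockE x y : (pblock (preim_partition lab [set: V]) x ==
                    pblock (preim_partition lab [set: V]) y) = (lab x == lab y).
  by rewrite eq_pblock ?cP ?inE // mem_pblock_preim.
by apply/setP => u; rewrite !inE !pblockE.
Qed.

Lemma tolerant_clustering_of_labelling (X : eqType) plus (t : V -> nat)
    (lab : V -> X) :
  (forall v, #|error_set plus lab v| <= t v) -> tolerant_clustering plus t.
Proof.
move=> lab_tol; exists (preim_partition lab [set: V]).
split=> [|v]; first exact: preim_partitionP.
by rewrite /errors -/(error_set _ _ _) error_set_preim_partition.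
Qed.

End Labellings.

Lemma partition_of_closed_blocks (T : finType) (h : T -> {set T}) :
  (forall u, u \in h u) -> (forall u v, v \in h u -> h v = h u) ->
  partition (preim_partition h [set: T]) [set: T] /\
  forall B, B \in preim_partition h [set: T] -> exists u, B = h u.
Proof.
move=> mem_h h_closed; have pP := preim_partitionP h [set: T].
split=> // B BP; have [_ tiP notP0] := and3P pP.
have /set0Pn [x xB] : B != set0 by apply: contraNneq notP0 => <-.
exists x; rewrite -(def_pblock tiP BP xB); apply/setP => y.
rewrite mem_pblock_preim; apply/eqP/idP => [-> | /h_closed //]; exact: mem_h.
Qed.

Section TrianglePartitionToClustering.

Variables (T : finType) (e : rel T).
Hypotheses (e_sym : symmetric e) (e_reg : forall v : T, #|[set u | e v u]| = 4).
Variable Q : {set {set T}}.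
Hypotheses (Q_part : partition Q [set: T])
  (Q_tri : forall B, B \in Q -> #|B| = 3 /\ {in B &, forall x y, x != y -> e x y}).

Let Q_triv : trivIset Q. Proof. by case/and3P: Q_part. Qed.
Let mem_block v : v \in pblock Q v.
Proof. by rewrite mem_pblock (cover_partition Q_part) inE. Qed.
Let block_in v : pblock Q v \in Q.
Proof. by rewrite pblock_mem // (cover_partition Q_part) inE. Qed.

Definition triangle_label (x : HV T) : ({set T} + triple T)%type :=
  match x with
  | inl u => inl (pblock Q u)
  | inr (A, _) => if val A \in Q then inl (val A) else inr A
  end.

Lemma gadget_vertex_errors (A : triple T) i :
  #|error_set (hplus e) triangle_label (inr (A, i))| <= 3.
Proof.
have sub : error_set (hplus e) triangle_label (inr (A, i)) \subset inl @: val A.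
  apply/subsetP => -[v | [A' j]]; rewrite !inE /=.
  - rewrite (mem_imset _ _ inl_inj); case vA: (v \in val A) => //=.
    by case: ifP => // AQ /eqP [eA]; rewrite -eA mem_block in vA.
  - case: (eqVneq A' A) => [-> | nA] /=; first by rewrite eqxx andbF.
    case/andP=> _; case: ifP; case: ifP => // AQ A'Q /eqP [] // eA.
    + by rewrite (val_inj eA) eqxx in nA.
    + by rewrite eA eqxx in nA.
apply: leq_trans (subset_leq_card sub) _.
by rewrite (card_imset _ (@inl_inj T _)) (eqP (valP A)).
Qed.

Lemma original_vertex_errors u :
  #|error_set (hplus e) triangle_label (inl u)| <= 7 * ('C(#|T|.-1, 2) - 1) + 2.
Proof.
set B := pblock Q u; have [cB B_clique] := Q_tri (block_in u).
pose Bt : triple T := Sub B (introT eqP cB).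
pose S := [set A : triple T | u \in val A] :\ Bt.
pose N := [set v | e u v].
have sub : error_set (hplus e) triangle_label (inl u)
    \subset inl @: (N :\: B) :|: inr @: setX S [set: 'I_7].
  apply/subsetP => -[v | [A i]]; rewrite !inE /=.
  - move=> /andP[vu err]; apply/orP; left; rewrite (mem_imset _ _ inl_inj) !inE.
    have {}vu : v != u by apply: contraNneq vu => ->.
    case evu: (e v u) err => /eqP err.
    + rewrite e_sym evu andbT; apply/negP => vB; apply: err; congr inl.
      exact: def_pblock Q_triv (block_in u) vB.
    + have vB : v \in B by rewrite /B; case: err => <-.
      by move: (B_clique v u vB (mem_block u) vu); rewrite evu.
  - move=> err; apply/orP; right; rewrite (mem_imset _ _ inr_inj).
    apply/setXP; split => //; rewrite !inE.
    case uA: (u \in val A) err => /= err.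
    + by rewrite andbT; apply: contra err => /eqP ->; rewrite /= block_in.
    + by move: err; case: ifP => // _ /eqP [eAB]; rewrite eAB mem_block in uA.
apply: leq_trans (subset_leq_card sub) _.
rewrite card_inl_inr_setU cardsX cardsT card_ord card_other_triples_at ?mem_block //.
have : 2 <= #|N :&: B|.
  have <- : #|B :\ u| = 2 by have := cB; rewrite (cardsD1 u B) mem_block add1n => -[].
  apply/subset_leq_card/subsetP => v; rewrite !inE => /andP[vu vB].
  by rewrite vB andbT; apply: B_clique; rewrite // eq_sym.
rewrite cardsD e_reg; lia.
Qed.

Lemma tolerant_clustering_of_triangle_partition :
  tolerant_clustering (hplus e) (@tol T).
Proof.
apply: (@tolerant_clustering_of_labelling _ _ _ _ triangle_label) => -[u | [A i]].
- exact: original_vertex_errors.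
- exact: gadget_vertex_errors.
Qed.

End TrianglePartitionToClustering.

Section ClusteringToTrianglePartition.

Variables (T : finType) (e : rel T).
Hypotheses (e_sym : symmetric e) (e_irr : irreflexive e)
  (e_reg : forall v : T, #|[set u | e v u]| = 4) (T_ge3 : 3 <= #|T|).
Variables (X : eqType) (lab : HV T -> X).
Hypothesis lab_tol : forall v, #|error_set (hplus e) lab v| <= tol v.

Local Notation err v := (error_set (hplus e) lab v).

Let triples_at_gt0 : 0 < 'C(#|T|.-1, 2).
Proof. by rewrite bin_gt0; lia. Qed.

Lemma gadget_label_const (A : triple T) i j : lab (inr (A, i)) = lab (inr (A, j)).
Proof.
pose D k := [set l : 'I_7 | lab (inr (A, l)) != lab (inr (A, k))].
have D_small k : #|D k| <= 3.
  apply: leq_trans (lab_tol (inr (A, k))).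
  rewrite -(card_imset _ (@gadget_inj _ A)); apply/subset_leq_card/subsetP => w.
  case/imsetP => l; rewrite inE => lk ->; rewrite inE /= eqxx lk andbT.
  by apply: contraNneq lk => -[->].
apply/eqP; apply: contraT => ij.
have : #|[set: 'I_7]| <= #|D i :|: D j|.
  apply/subset_leq_card/subsetP => k _; rewrite !inE.
  by case: (eqVneq (lab (inr (A, k))) (lab (inr (A, i)))) => // ->.
rewrite cardsT card_ord => /leq_trans/(_ (leq_card_setU _ _)).
by move: (D_small i) (D_small j); lia.
Qed.

Definition gadget_label (A : triple T) := lab (inr (A, ord0)).

Lemma gadget_label_inj : injective gadget_label.
Proof.
move=> A A' gAA'; apply/eqP; apply: contraT => nA.
have nA' : (A' == A) = false by rewrite eq_sym (negbTE nA).
have : #|[set: 'I_7]| <= #|err (inr (A, ord0))|.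
  rewrite -(card_imset _ (@gadget_inj _ A')); apply/subset_leq_card/subsetP => w.
  case/imsetP => j _ ->; rewrite inE /= nA'.
  rewrite (gadget_label_const A' j ord0) -/(gadget_label A') -gAA' eqxx andbT.
  by apply: contraFN nA' => /eqP [->].
by rewrite cardsT card_ord => /leq_trans/(_ (lab_tol _)).
Qed.

Lemma exists_home u :
  exists A : triple T, (u \in val A) && (gadget_label A == lab (inl u)).
Proof.
apply/existsP; apply: contraT; rewrite negb_exists => /forallP no_home.
have : #|setX [set A : triple T | u \in val A] [set: 'I_7]| <= #|err (inl u)|.
  rewrite -(card_imset _ (@inr_inj T _)); apply/subset_leq_card/subsetP => w.
  case/imsetP => -[A j] /setXP[]; rewrite inE => uA _ ->.
  rewrite inE /= uA (gadget_label_const A j ord0) -/(gadget_label A).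
  by have := no_home A; rewrite uA.
rewrite cardsX card_triples_at cardsT card_ord => /leq_trans/(_ (lab_tol _)) /= bound.
by exfalso; move: triples_at_gt0 bound; set c := 'C(_, _); lia.
Qed.

Definition home u : triple T := xchoose (exists_home u).

Lemma mem_home u : u \in val (home u).
Proof. by case/andP: (xchooseP (exists_home u)). Qed.

Lemma gadget_label_home u : gadget_label (home u) = lab (inl u).
Proof. by case/andP: (xchooseP (exists_home u)) => _ /eqP. Qed.

Lemma home_eq u v : lab (inl v) = lab (inl u) -> home v = home u.
Proof. by move=> uv; apply: gadget_label_inj; rewrite !gadget_label_home. Qed.

Lemma home_errors u :
  #|[set v | e u v] :\: val (home u)| +
  #|[set v in val (home u) | e u v && (lab (inl v) != lab (inl u))]| <= 2.
Proof.
set A := val (home u); have uA : u \in A := mem_home u.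
pose Terr := [set v | inl v \in err (inl u)].
have Terr_small : #|Terr| <= 2.
  have : #|inl @: Terr :|: inr @: setX ([set B : triple T | u \in val B] :\ home u)
                                        [set: 'I_7]| <= #|err (inl u)|.
    apply/subset_leq_card/subsetP => w; rewrite inE; case/orP => /imsetP.
    - by case=> v; rewrite inE => ? ->.
    - case=> -[B j] /setXP[]; rewrite !inE => /andP[nB uB] _ ->.
      rewrite /= uB (gadget_label_const B j ord0) -/(gadget_label B).
      by rewrite -(gadget_label_home u) (inj_eq gadget_label_inj).
  rewrite card_inl_inr_setU cardsX card_other_triples_at // cardsT card_ord.
  by move/leq_trans/(_ (lab_tol _)) => /=; move: triples_at_gt0; lia.
apply: leq_trans Terr_small; rewrite -cardsUI disjoint_setI0 ?cards0 ?addn0.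
- apply/subset_leq_card/subsetP => v; rewrite !inE.
  case/orP => [/andP[vA euv] | /andP[_ /andP[euv luv]]].
  + have vu : inl v != inl u :> HV T by apply: contraNneq vA => -[->].
    rewrite vu /= e_sym euv; apply: contraNneq vA => /home_eq vu_home.
    by rewrite /A -vu_home mem_home.
  + have vu : inl v != inl u :> HV T by apply: contraNneq luv => ->.
    by rewrite vu /= e_sym euv.
- rewrite disjoint_subset; apply/subsetP => v; rewrite !inE => /andP[vA _].
  by rewrite (negbTE vA).
Qed.

Lemma home_triangle u :
  {in val (home u), forall v, v != u -> e u v /\ lab (inl v) = lab (inl u)}.
Proof.
move=> v vA vu; have := home_errors u.
set A := val (home u); set M := [set v | e u v].
have cA : #|A :\ u| = 2.
  by have := eqP (valP (home u)); rewrite (cardsD1 u) mem_home add1n => -[].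
have sMA : M :&: A \subset A :\ u.
  apply/subsetP => w; rewrite !inE => /andP[euw ->]; rewrite andbT.
  by apply: contraTneq euw => ->; rewrite e_irr.
rewrite cardsD e_reg; have := subset_leq_card sMA; rewrite cA => cMA errs.
have /eqP eMA : M :&: A == A :\ u by rewrite eqEcard sMA cA; lia.
have : v \in A :\ u by rewrite !inE vu vA.
rewrite -eMA !inE => /andP[euv _].
split=> //; apply/eqP; apply: contraT => luv.
by move: errs; rewrite eMA cA (cardsD1 v) !inE vA euv luv.
Qed.

Lemma home_closed u v : v \in val (home u) -> home v = home u.
Proof.
have [-> // | vu vA] := eqVneq v u.
by apply: home_eq; have [] := home_triangle vA vu.
Qed.

Lemma triangle_partition_of_tolerant_labelling : triangle_partition e.
Proof.
have [Q_part Q_blocks] := partition_of_closed_blocks mem_home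
  (fun u v vA => congr1 val (home_closed vA)).
exists (preim_partition (fun u => val (home u)) [set: T]); split => // B.
case/Q_blocks => u ->; split; first exact/eqP/(valP (home u)).
move=> x y xA yA xy; have yAx : y \in val (home x) by rewrite (home_closed xA).
by have [] := home_triangle yAx; rewrite // eq_sym.
Qed.

End ClusteringToTrianglePartition.

Theorem corollary1 (T : finType) (e : rel T)
  (e_sym : symmetric e) (e_irr : irreflexive e)
  (e_reg : forall v : T, #|[set u | e v u]| = 4)
  (hn : 7 <= #|T|) :
  tolerant_clustering (hplus e) (@tol T) <-> triangle_partition e.
Proof.
split.
- case=> P [_ P_tol].
  exact: (triangle_partition_of_tolerant_labelling e_sym e_irr e_reg
           (leq_trans _ hn) P_tol).
- case=> Q [Q_part Q_tri].
  exact: (tolerant_clustering_of_triangle_partition e_sym e_reg Q_part Q_tri).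
Qed.
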